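(* Let $\mu^\star_0,\mu^\star_1$ be any probability measures on $\mathbb{R}^d$ with finite second moment. Then any coupling $(Y_0,Y_1)$ of $\mu^\star_0$ and $\mu^\star_1$ induces an optimal solution $(Y_t)_{t\in[0,1]}$ of the P-spline problem with data $\mu^\star_0,\mu^\star_1$ at times $0,1$, whose values at times $0$ and $1$ are $Y_0$ and $Y_1$.
   Context: The P-spline problem with data $\mu^\star_{t_0},\dots,\mu^\star_{t_N}$ at times $0=t_0<\dots<t_N=1$ is $\inf_{(Y_t)}\int_0^1\mathbb E[\|\ddot Y_t\|^2]\,dt$ over stochastic processes $(Y_t)_{t\in[0,1]}$ in $\mathbb{R}^d$ with twice differentiable paths and $Y_{t_i}\sim\mu^\star_{t_i}$ for all $i$. *)

From HB Require Import structures.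
From mathcomp Require Import all_boot all_order all_algebra.
From mathcomp Require Import all_classical all_reals all_analysis.
Set Implicit Arguments. Unset Strict Implicit. Unset Printing Implicit Defensive.
Import Order.TTheory GRing.Theory Num.Theory.
Import numFieldNormedType.Exports.
Local Open Scope classical_set_scope.
Local Open Scope ring_scope.

(* R^d, represented by row vectors 'rV[R]_d, equipped with its Borel
   sigma-algebra (generated by the open sets of its standard topology). *)
Definition Rd (R : realType) (d : nat)
    : measurableType (sigma_display (@open 'rV[R]_d)) :=
  g_sigma_algebraType (@open 'rV[R]_d).

Definition sqnorm (R : realType) (d : nat) (v : 'rV[R]_d) : R :=
  \sum_(i < d) v ord0 i ^+ 2.

Definition finite_second_moment (R : realType) (d : nat)
    (mu : probability (Rd R d) R) : Prop :=
  (\int[mu]_x (sqnorm (x : 'rV[R]_d))%:E < +oo)%E.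

Definition has_law dO (Omega : measurableType dO) (R : realType) (d : nat)
    (P : probability Omega R) (X : Omega -> 'rV[R]_d)
    (mu : probability (Rd R d) R) : Prop :=
  measurable_fun [set: Omega] (X : Omega -> Rd R d) /\
  forall A : set (Rd R d), measurable A -> P (X @^-1` A) = mu A.

Definition accel dO (Omega : measurableType dO) (R : realType) (d : nat)
    (Y : R -> Omega -> 'rV[R]_d) (w : Omega) : R -> 'rV[R]_d :=
  derive1 (derive1 (fun s => Y s w)).

Definition twice_diff_process dO (Omega : measurableType dO) (R : realType)
    (d : nat) (Y : R -> Omega -> 'rV[R]_d) : Prop :=
  (forall t, measurable_fun [set: Omega] (Y t : Omega -> Rd R d)) /\
  (forall w t, derivable (fun s => Y s w) t 1 /\
               derivable (derive1 (fun s => Y s w)) t 1).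

Definition spline_cost dO (Omega : measurableType dO) (R : realType)
    (d : nat) (P : probability Omega R) (Y : R -> Omega -> 'rV[R]_d)
    : \bar R :=
  (\int[lebesgue_measure]_(t in `[0%R, 1%R])
     \int[P]_w (sqnorm (accel Y w t))%:E)%E.

Definition pspline_admissible dO (Omega : measurableType dO) (R : realType)
    (d : nat) (data : seq (R * probability (Rd R d) R))
    (P : probability Omega R) (Y : R -> Omega -> 'rV[R]_d) : Prop :=
  twice_diff_process Y /\
  forall p, p \in data -> has_law P (Y p.1) p.2.

From HB Require Import structures.
From mathcomp Require Import all_boot all_order all_algebra.
From mathcomp Require Import all_classical all_reals all_analysis.
Set Implicit Arguments. Unset Strict Implicit. Unset Printing Implicit Defensive.
Import Order.TTheory GRing.Theory Num.Theory.
Import numFieldNormedType.Exports.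
Local Open Scope classical_set_scope.
Local Open Scope ring_scope.

(** With only two marginals, the linear interpolation
    [Y_t = Y_0 + t (Y_1 - Y_0)] of the given coupling has zero acceleration,
    so its cost is [0], the least possible value.  The only real work is measurability of [Y_t]
    for the Borel sigma-algebra of [R^d]: its coordinates are measurable, and
    every open set of [R^d] is a countable union of balls with rational
    centres and radii. *)

Section row_vector_borel.
Variables (R : realType) (d : nat).

Lemma ball_rowP (c y : 'rV[R]_d) r :
  ball c r y <-> 0 < r /\ forall i, ball (c ord0 i) r (y ord0 i).
Proof.
split=> [[r0 cy]|[r0 cy]]; split=> // i j.
by rewrite ord1; exact: cy.
Qed.

Lemma measurable_coord (i : 'I_d) :
  measurable_fun setT (fun v : Rd R d => v ord0 i).
Proof.
apply: (measurability _ (measurable_realfun.RGenOpens.measurableE R)).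
move=> _ [_ [a [b ->]] <-]; rewrite setTI; apply: sub_gen_smallest.
exact: (continuousP _).1 (@coord_continuous R 1 d ord0 i) _ (interval_open _ _).
Qed.

Lemma rat_row_dense (x : 'rV[R]_d) (e : R) : 0 < e ->
  exists q : 'rV[rat]_d, ball (map_mx (@ratr R) q) e x.
Proof.
move=> e0; have /fin_all_exists[q qx] : forall i : 'I_d, exists q : rat,
    ball (ratr q : R) e (x ord0 i).
  move=> i; have /rat_in_itvoo[q] : x ord0 i - e < x ord0 i + e.
    by rewrite ltrBlDr -addrA ltrDl addr_gt0.
  by move=> qx; exists q; apply: ball_sym; rewrite ball_itv; exact: qx.
by exists (\row_i q i); apply/ball_rowP; split=> // i; rewrite !mxE.
Qed.

Definition rat_ball (k : 'rV[rat]_d * rat) : set 'rV[R]_d :=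
  ball (map_mx (@ratr R) k.1) (ratr k.2).

Lemma open_bigcup_rat_ball (U : set 'rV[R]_d) : open U ->
  U = \bigcup_(k in [set k | rat_ball k `<=` U]) rat_ball k.
Proof.
move=> oU; apply/seteqP; split=> [x Ux|x [k kU /kU //]].
have /nbhs_ballP[e e0 xeU] := oU x Ux.
have /rat_in_itvoo[r] : 0 < e / 2 by rewrite divr_gt0.
rewrite in_itv /= => /andP[r0 re].
have [q qx] := rat_row_dense x r0.
exists (q, r) => //= y /(ball_triangle (ball_sym qx)) xy; apply: xeU.
by apply: le_ball xy; rewrite (splitr e) lerD // ltW.
Qed.

Variables (dO : measure_display) (Omega : measurableType dO).

Lemma measurable_fun_coord (X : Omega -> 'rV[R]_d) (i : 'I_d) :
  measurable_fun setT (X : Omega -> Rd R d) ->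
  measurable_fun setT (fun w => X w ord0 i).
Proof. by move=> mX; exact: measurableT_comp (measurable_coord i) mX. Qed.

Variable f : Omega -> 'rV[R]_d.
Hypothesis mf : forall i, measurable_fun setT (fun w => f w ord0 i).

Lemma measurable_preimage_ball (c : 'rV[R]_d) (r : R) :
  measurable (f @^-1` ball c r).
Proof.
have [r0|r0] := ltP 0 r; last by rewrite le0_ball0 // preimage_set0.
suff -> : f @^-1` ball c r =
    \bigcap_(i in setT) ((fun w => f w ord0 i) @^-1` ball (c ord0 i) r).
  apply: fin_bigcap_measurable; first exact: finite_finset.
  move=> i _; rewrite -[X in measurable X]setTI; apply: mf => //.
  by apply: measurable_realfun.open_measurable; exact: ball_open.
apply/seteqP; split=> [w /ball_rowP[_ cf] i _|w cf]; first exact: cf.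
by apply/ball_rowP; split=> // i; exact: cf.
Qed.

Lemma measurable_fun_row : measurable_fun setT (f : Omega -> Rd R d).
Proof.
apply: (@measurability _ _ _ (Rd R d) _ f (@open 'rV[R]_d) erefl) => _ [U oU <-].
rewrite setTI (open_bigcup_rat_ball oU) preimage_bigcup bigcup_mkcond.
apply: countable_bigcupT_measurable; first exact: countableP.
by move=> k; case: ifP => // _; exact: measurable_preimage_ball.
Qed.

End row_vector_borel.

Lemma is_derive_line (R : numFieldType) (V : normedModType R) (a b : V) (t : R) :
  is_derive t 1 (fun s : R => a + s *: b) b.
Proof.
have lin : is_derive t 1 (fun s : R => s *: b) b.
  apply: DeriveDef; first exact: diff_derivable.
  by rewrite deriveE // diff_val scale1r.
by have := is_deriveD (is_derive_cst a t 1) lin; rewrite add0r.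
Qed.

Lemma derive1_line (R : numFieldType) (V : normedModType R) (a b : V) :
  derive1 (fun s : R => a + s *: b) = cst b.
Proof.
apply: funext => t; have lin := is_derive_line a b t.
by rewrite derive1E derive_val.
Qed.

Lemma sqnorm0 (R : realType) (d : nat) : sqnorm (0 : 'rV[R]_d) = 0.
Proof. by rewrite /sqnorm big1 // => i _; rewrite mxE expr0n. Qed.

Lemma sqnorm_ge0 (R : realType) (d : nat) (v : 'rV[R]_d) : 0 <= sqnorm v.
Proof. by rewrite /sqnorm sumr_ge0 // => i _; rewrite sqr_ge0. Qed.

Section spline_cost.
Variables (R : realType) (d : nat) (dO : measure_display) (Omega : measurableType dO).
Variables (P : probability Omega R) (Y : R -> Omega -> 'rV[R]_d).

Lemma spline_cost_ge0 : (0 <= spline_cost P Y)%E.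
Proof.
apply: integral_ge0 => t _; apply: integral_ge0 => w _.
by rewrite lee_fin sqnorm_ge0.
Qed.

Lemma spline_cost_eq0 : (forall w t, accel Y w t = 0) -> spline_cost P Y = 0%E.
Proof.
move=> accel0.
rewrite /spline_cost (eq_integral (fun _ => 0%E)) ?integral0 // => t _.
by rewrite (eq_integral (fun _ => 0%E)) ?integral0 // => w _; rewrite accel0 sqnorm0.
Qed.

End spline_cost.

Section linear_interpolation.
Variables (R : realType) (d : nat) (dO : measure_display) (Omega : measurableType dO).
Variables (Y0 Y1 : Omega -> 'rV[R]_d).

Definition lerp_process : R -> Omega -> 'rV[R]_d :=
  fun t w => Y0 w + t *: (Y1 w - Y0 w).

Lemma lerp_process0 : lerp_process 0 = Y0.
Proof. by apply: funext => w; rewrite /lerp_process scale0r addr0. Qed.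

Lemma lerp_process1 : lerp_process 1 = Y1.
Proof. by apply: funext => w; rewrite /lerp_process scale1r addrC subrK. Qed.

Lemma accel_lerp_process w t : accel lerp_process w t = 0.
Proof. by rewrite /accel /lerp_process derive1_line derive1_cst. Qed.

Lemma lerp_process_twice_diff :
  measurable_fun setT (Y0 : Omega -> Rd R d) ->
  measurable_fun setT (Y1 : Omega -> Rd R d) ->
  twice_diff_process lerp_process.
Proof.
move=> mY0 mY1; split=> [t|w t].
  apply: measurable_fun_row => i; under eq_fun do rewrite !mxE.
  apply: measurable_realfun.measurable_funD; first exact: measurable_fun_coord.
  apply: measurable_realfun.measurable_funM; first exact: measurable_cst.
  by apply: measurable_realfun.measurable_funB; exact: measurable_fun_coord.
split; first by case: (is_derive_line (Y0 w) (Y1 w - Y0 w) t).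
by rewrite /lerp_process derive1_line; exact: derivable_cst.
Qed.

Lemma lerp_process_admissible (P : probability Omega R)
    (mu0 mu1 : probability (Rd R d) R) :
  has_law P Y0 mu0 -> has_law P Y1 mu1 ->
  pspline_admissible [:: (0, mu0); (1, mu1)] P lerp_process.
Proof.
move=> hY0 hY1; split; first exact: lerp_process_twice_diff hY0.1 hY1.1.
move=> p; rewrite !inE => /orP[] /eqP -> /=.
  by rewrite lerp_process0.
by rewrite lerp_process1.
Qed.

End linear_interpolation.

Theorem proposition4 (R : realType) (d : nat)
    (mu0 mu1 : probability (Rd R d) R)
    (hmu0 : finite_second_moment mu0) (hmu1 : finite_second_moment mu1)
    (dO : measure_display) (Omega : measurableType dO)
    (P : probability Omega R) (Y0 Y1 : Omega -> 'rV[R]_d)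
    (hY0 : has_law P Y0 mu0) (hY1 : has_law P Y1 mu1) :
  exists Y : R -> Omega -> 'rV[R]_d,
    [/\ pspline_admissible [:: (0, mu0); (1, mu1)] P Y,
        Y 0 = Y0, Y 1 = Y1 &
        forall (dO' : measure_display) (Omega' : measurableType dO')
               (P' : probability Omega' R) (Y' : R -> Omega' -> 'rV[R]_d),
          pspline_admissible [:: (0, mu0); (1, mu1)] P' Y' ->
          (spline_cost P Y <= spline_cost P' Y')%E].
Proof.
exists (lerp_process Y0 Y1); split.
- exact: lerp_process_admissible.
- exact: lerp_process0.
- exact: lerp_process1.
- move=> dO' Omega' P' Y' _.
  by rewrite spline_cost_eq0; [exact: spline_cost_ge0|exact: accel_lerp_process].
Qed.
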